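(* For any $d$-dimensional Fano simplex $\Delta$ of Gorenstein index $g$, the number $g^{d-1}\lambda(\Delta^* )$ is an integer.
   Context: A Fano simplex is a full-dimensional simplex in $\mathbb{Q}^d$ with primitive vertices in $\mathbb{Z}^d$ and the origin in its interior. Its dual is $\Delta^*=\{u:\langle u,v\rangle\ge-1\ \forall v\in\Delta\}$. The Gorenstein index of a Fano simplex is the least $g\ge1$ such that $g\Delta^*$ has integral vertices. For an IP simplex (origin in the interior) with vertices $v_0,\dots,v_d$, the weight system is $Q=(q_0,\dots,q_d)$, $q_i=|\det(v_j:j\neq i)|$, and the factor $\lambda$ is the unique positive rational with $Q=\lambda Q'$, $Q'$ positive integers with $\gcd 1$. *)

From HB Require Import structures.
From mathcomp Require Import all_boot all_order all_algebra.
Set Implicit Arguments. Unset Strict Implicit. Unset Printing Implicit Defensive.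
Import Order.TTheory GRing.Theory Num.Theory.
Local Open Scope ring_scope.

Definition point d := 'rV[rat]_d.

Definition pairing d (u v : point d) : rat := \sum_(j < d) u 0 j * v 0 j.

Definition integral d (x : point d) : Prop := forall j, x 0 j \is a Num.int.

Definition primitive d (x : point d) : Prop :=
  integral x /\
  forall (k : nat) (w : point d), integral w -> x = k%:R *: w -> k = 1%N.

Definition conv_hull d n (v : 'I_n -> point d) : point d -> Prop :=
  fun x => exists a : 'I_n -> rat, (forall i, 0 <= a i) /\ \sum_i a i = 1
           /\ x = \sum_i a i *: v i.

Definition affinely_independent d n (v : 'I_n -> point d) : Prop :=
  forall c : 'I_n -> rat, \sum_i c i = 0 -> \sum_i c i *: v i = 0 ->
    forall i, c i = 0.

(* A d-dimensional Fano simplex with vertices v_0..v_d: full-dimensional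
   (affinely independent vertices), primitive integral vertices, and the
   origin in its interior (i.e. a strictly positive convex combination of the
   vertices, which for a full-dimensional simplex is exactly the interior). *)
Definition Fano_simplex d (v : 'I_d.+1 -> point d) : Prop :=
  affinely_independent v /\ (forall i, primitive (v i)) /\
  exists a : 'I_d.+1 -> rat, (forall i, 0 < a i) /\ \sum_i a i = 1 /\
    \sum_i a i *: v i = 0.

Definition dual d (S : point d -> Prop) : point d -> Prop :=
  fun u => forall x, S x -> -1 <= pairing u x.

Definition dilate d (g : rat) (S : point d -> Prop) : point d -> Prop :=
  fun y => exists x, S x /\ y = g *: x.

Definition is_vertex d (S : point d -> Prop) (u : point d) : Prop :=
  S u /\ forall x y (t : rat), S x -> S y -> 0 < t < 1 ->
    u = t *: x + (1 - t) *: y -> x = y.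

Definition has_integral_vertices d (S : point d -> Prop) : Prop :=
  forall u, is_vertex S u -> integral u.

Definition gorenstein_index d (v : 'I_d.+1 -> point d) (g : nat) : Prop :=
  (0 < g)%N /\ has_integral_vertices (dilate g%:R (dual (conv_hull v))) /\
  forall g' : nat, (0 < g')%N ->
    has_integral_vertices (dilate g'%:R (dual (conv_hull v))) -> (g <= g')%N.

(* weight system Q = (q_0..q_d), q_i = |det(w_j : j <> i)| of an IP simplex
   with vertices w_0..w_d *)
Definition weight d (w : 'I_d.+1 -> point d) (i : 'I_d.+1) : rat :=
  `| \det (\matrix_(k < d, j < d) w (lift i k) 0 j) |.

Definition is_factor n (Q : 'I_n -> rat) (lam : rat) : Prop :=
  0 < lam /\ exists Q' : 'I_n -> nat, (forall i, (0 < Q' i)%N) /\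
    \big[gcdn/0%N]_(i < n) Q' i = 1%N /\ forall i, Q i = lam * (Q' i)%:R.

Definition enumerates_vertices d (S : point d -> Prop) (w : 'I_d.+1 -> point d)
  : Prop := injective w /\ forall u, is_vertex S u <-> exists i, u = w i.

From HB Require Import structures.
From mathcomp Require Import all_boot all_order all_algebra.
From mathcomp Require Import lra.
Import Order.TTheory GRing.Theory Num.Theory.
Local Open Scope ring_scope.
Set Implicit Arguments. Unset Strict Implicit.

(* Let v_0, ..., v_d be the vertices of Delta, so that
   Delta^* = { u | <u, v_j> >= -1 for all j }.  A vertex u of Delta^* is tight
   (<u, v_j> = -1) at all indices but exactly one, its loose index k(u): with two
   loose indices u could be moved both ways along a nonzero direction orthogonal
   to the other d - 1 points v_m, and with none the relation
   0 = sum_j a_j v_j (a_j > 0) would give 0 = -1.  A vertex is determined by its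
   loose index, so k is a bijection on the d + 1 vertices w_0, ..., w_d.  Hence
   for each i the rows w_j (j <> i) of the matrix W_i are all tight at v_(k(w_i)).
   As g W_i is integral, Cramer's rule makes (g^(d-1) det W_i) v_(k(w_i))
   integral, and primitivity of that point makes g^(d-1) q_i = |g^(d-1) det W_i|
   an integer.  Since the reduced weights are coprime, g^(d-1) lambda is then an
   integer as well. *)

Lemma det_int n (A : 'M[rat]_n) :
  (forall i j, A i j \is a Num.int) -> \det A \is a Num.int.
Proof.
move=> A_int; apply: rpred_sum => s _; apply: rpredM.
  by apply: rpredX; apply: rpredN; apply: rpred1.
by apply: rpred_prod => i _; apply: A_int.
Qed.

Lemma denq_dvd_of_int_mul (x : rat) (c : int) :
  x * c%:~R \is a Num.int -> (denq x %| c)%Z.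
Proof.
move=> /intrP [k xc_k].
have num_c : numq x * c = k * denq x.
  by apply: (@intr_inj rat); rewrite !rmorphM /= numqE -xc_k mulrAC.
have : (denq x %| numq x * c)%Z by rewrite num_c dvdz_mull // dvdzz.
by rewrite Gauss_dvdzr // coprimezE coprime_sym coprime_num_den.
Qed.

Lemma int_of_denq1 (x : rat) : `|denq x|%N = 1%N -> x \is a Num.int.
Proof.
move=> den1; rewrite Qint_def; apply/eqP.
by move: (denq_gt0 x) den1; case: (denq x) => [n|n] //= _ ->.
Qed.

(* If x p is integral for a primitive point p, then x is an integer: the
   denominator of x divides every coordinate of p, so p is a multiple of an
   integral point by that denominator. *)
Lemma primitive_scale_int d (p : point d) (x : rat) :
  primitive p -> (forall j, x * p 0 j \is a Num.int) -> x \is a Num.int.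
Proof.
move=> [p_int p_prim] xp_int.
have den_dvd j : (denq x %| numq (p 0%R j))%Z.
  by apply: denq_dvd_of_int_mul; rewrite (numqK (p_int j)).
pose q : point d := \row_j ((numq (p 0%R j)) %/ denq x)%Z%:~R.
apply: int_of_denq1; apply: (p_prim _ q); first by move=> j; rewrite mxE intr_int.
apply/rowP => j; rewrite !mxE -{1}(numqK (p_int j)) -{1}(divzK (den_dvd j)).
rewrite rmorphM /= mulrC; congr (_ * _).
by move: (denq_gt0 x); case: (denq x).
Qed.

(* If x Q_i is an integer for every weight Q_i, then so is x lam, where lam is
   the factor of Q: the denominator of x lam divides every reduced weight,
   hence their gcd 1. *)
Lemma factor_scale_int n (Q : 'I_n -> rat) (lam x : rat) :
  is_factor Q lam -> (forall i, x * Q i \is a Num.int) -> x * lam \is a Num.int.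
Proof.
move=> [_ [Q' [_ [Q'_gcd Q_def]]]] xQ_int.
apply: int_of_denq1; apply/eqP; rewrite -dvdn1 -Q'_gcd.
apply/dvdn_biggcdP => i _; apply: (@denq_dvd_of_int_mul _ (Q' i)%:Z).
by rewrite -mulrA -Q_def; apply: xQ_int.
Qed.

(* There is no primitive point in dimension 0, since the only point is 0 * 0. *)
Lemma no_primitive_point0 (p : point 0) : ~ primitive p.
Proof.
move=> [_ p_prim].
have zero_int : integral (0 : point 0) by move=> [j j_lt0]; exfalso; rewrite ltn0 in j_lt0.
by have := p_prim 0%N 0 zero_int; rewrite scale0r => /(_ (thinmx0 _)).
Qed.

Lemma pairing_sumr d n (u : point d) (a : 'I_n -> rat) (x : 'I_n -> point d) :
  pairing u (\sum_i a i *: x i) = \sum_i a i * pairing u (x i).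
Proof.
rewrite /pairing; under eq_bigr => j _ do rewrite summxE mulr_sumr.
rewrite exchange_big /=; apply: eq_bigr => i _.
by rewrite mulr_sumr; apply: eq_bigr => j _; rewrite mxE mulrCA.
Qed.

Lemma pairingDl d (u z x : point d) :
  pairing (u + z) x = pairing u x + pairing z x.
Proof. by rewrite /pairing -big_split; apply: eq_bigr => j _; rewrite mxE mulrDl. Qed.

Lemma pairingZl d (c : rat) (z x : point d) :
  pairing (c *: z) x = c * pairing z x.
Proof. by rewrite /pairing mulr_sumr; apply: eq_bigr => j _; rewrite mxE mulrA. Qed.

Lemma pairingBl d (u z x : point d) :
  pairing (u - z) x = pairing u x - pairing z x.
Proof. by rewrite -scaleN1r pairingDl pairingZl mulN1r. Qed.

Lemma dual_conv_hullP d n (v : 'I_n -> point d) (u : point d) :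
  dual (conv_hull v) u <-> forall j, -1 <= pairing u (v j).
Proof.
split=> [u_dual j | u_ge x [a [a_ge0 [a_sum ->]]]].
  apply: u_dual; exists (fun i => (i == j)%:R); split; first by move=> i; rewrite ler0n.
  by split; rewrite (bigD1 j) //= eqxx ?scale1r big1 ?addr0 // => i /negbTE ->;
    rewrite ?scale0r.
have -> : (-1 : rat) = \sum_i a i * -1 by rewrite -mulr_suml a_sum mul1r.
by rewrite pairing_sumr; apply: ler_sum => i _; rewrite ler_wpM2l.
Qed.

Lemma vertex_midpoint d (S : point d -> Prop) (u z : point d) :
  is_vertex S u -> S (u + z) -> S (u - z) -> z = 0.
Proof.
move=> [_ u_extreme] S_plus S_minus.
have E : u + z = u - z.
  apply: (u_extreme _ _ (1 / 2) S_plus S_minus); first by apply/andP; split; lra.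
  by apply/rowP => j; rewrite !mxE; lra.
by apply/rowP => j; have := congr1 (fun p : point d => p 0 j) E; rewrite !mxE; lra.
Qed.

(* Finitely many positive rationals have a common positive lower bound,
   namely (1 + sum_i 1 / c_i)^-1. *)
Lemma pos_lower_bound (I : finType) (c : I -> rat) :
  (forall i, 0 < c i) -> exists2 e, 0 < e & forall i, e <= c i.
Proof.
move=> c_pos; have inv_ge0 (P : pred I) : 0 <= \sum_(i | P i) (c i)^-1.
  by apply: sumr_ge0 => i _; rewrite invr_ge0 ltW.
exists (1 + \sum_i (c i)^-1)^-1; first by rewrite invr_gt0; have := inv_ge0 predT; lra.
move=> i; rewrite -[c i]invrK lef_pV2 ?posrE ?invr_gt0 //; last first.
  by have := inv_ge0 predT; lra.
by rewrite (bigD1 i) //=; have := inv_ge0 (predC1 i); lra.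
Qed.

Lemma dilate_vertex d (S : point d -> Prop) (g : rat) (u : point d) :
  0 < g -> is_vertex S u -> is_vertex (dilate g S) (g *: u).
Proof.
move=> g_pos [Su u_extreme]; split; first by exists u.
move=> _ _ t [x [Sx ->]] [y [Sy ->]] t01 E; congr (g *: _).
apply: u_extreme Sx Sy t01 _; apply: (@scalerI _ _ g); first by rewrite gt_eqF.
by rewrite E scalerDr !scalerA mulrC [(1 - t) * g]mulrC.
Qed.

Section DualVertices.

Variables (d : nat) (v : 'I_d.+1 -> point d).

(* A vertex u of the dual cannot move along a direction z orthogonal to every
   v_j at which u is tight: for small e both u + e z and u - e z stay in the
   dual. *)
Lemma vertex_rigid (u z : point d) :
  is_vertex (dual (conv_hull v)) u ->
  (forall j, pairing z (v j) != 0 -> -1 < pairing u (v j)) -> z = 0.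
Proof.
move=> u_vert loose; have /dual_conv_hullP u_ge := u_vert.1.
pose c j := if pairing z (v j) == 0 then 1
            else (pairing u (v j) + 1) / `|pairing z (v j)|.
have [e e_pos e_le] : exists2 e, 0 < e & forall j, e <= c j.
  apply: pos_lower_bound => j; rewrite /c; case: eqP => [_ | /eqP z_j]; first exact: ltr01.
  by rewrite divr_gt0 ?normr_gt0 //; have := loose j z_j; lra.
have slack j : e * `|pairing z (v j)| <= pairing u (v j) + 1.
  have := u_ge j; have := e_le j; rewrite /c; case: eqP => [-> _ | /eqP z_j].
    by rewrite normr0 mulr0; lra.
  by rewrite ler_pdivlMr ?normr_gt0.
have move_ok t : `|t| <= e -> dual (conv_hull v) (u + t *: z).
  move=> t_le; apply/dual_conv_hullP => j; rewrite pairingDl pairingZl.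
  have : `|t| * `|pairing z (v j)| <= e * `|pairing z (v j)| by rewrite ler_wpM2r.
  have := slack j; have := ler_norm (- (t * pairing z (v j))).
  by rewrite normrN normrM; lra.
have u_plus : dual (conv_hull v) (u + e *: z) by apply: move_ok; rewrite gtr0_norm.
have u_minus : dual (conv_hull v) (u - e *: z).
  by rewrite -scaleNr; apply: move_ok; rewrite normrN gtr0_norm.
have /eqP := vertex_midpoint u_vert u_plus u_minus.
by rewrite scaler_eq0 (gt_eqF e_pos) => /eqP.
Qed.

(* For distinct indices k and l there is a nonzero direction orthogonal to the
   remaining d - 1 points v_m: the d x d matrix of the v_m, m <> k, with the row
   of v_l replaced by 0 is singular. *)
Lemma orthogonal_direction (k l : 'I_d.+1) : k != l ->
  exists2 z : point d, z != 0 &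
    forall m, m != k -> m != l -> pairing z (v m) = 0.
Proof.
move=> k_neq_l.
have [r0 r0_l] : exists r0, lift k r0 = l.
  by have [r0 -> | E] := unliftP k l; [exists r0 | rewrite E eqxx in k_neq_l].
pose B : 'M[rat]_d := \matrix_(r, j) (if lift k r == l then 0 else v (lift k r) 0 j).
have B_sing : \det B^T == 0.
  rewrite det_tr; apply/det0P; exists (delta_mx 0 r0).
    apply/eqP => /matrixP /(_ 0 r0); rewrite !mxE !eqxx /= => /eqP.
    by rewrite oner_eq0.
  by rewrite -rowE; apply/rowP => j; rewrite !mxE r0_l eqxx.
have /det0P [z z_neq0 zB] := B_sing.
exists z => // m m_k m_l; have [r m_r | E] := unliftP k m; last by rewrite E eqxx in m_k.
have := congr1 (fun M : 'rV[rat]_d => M 0 r) zB; rewrite !mxE => <-.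
by apply: eq_bigr => j _; rewrite !mxE -m_r (negbTE m_l).
Qed.

Lemma vertex_loose_unique (u : point d) (k l : 'I_d.+1) :
  is_vertex (dual (conv_hull v)) u ->
  -1 < pairing u (v k) -> -1 < pairing u (v l) -> k = l.
Proof.
move=> u_vert k_loose l_loose; have [// | k_neq_l] := eqVneq k l.
have [z /eqP z_neq0 z_orth] := orthogonal_direction k_neq_l.
exfalso; apply: z_neq0; apply: (vertex_rigid u_vert) => m.
have [-> // | m_k] := eqVneq m k; have [-> // | m_l] := eqVneq m l.
by rewrite z_orth ?eqxx.
Qed.

Variable a : 'I_d.+1 -> rat.
Hypothesis a_pos : forall i, 0 < a i.
Hypothesis a_bary : \sum_i a i *: v i = 0.

Lemma bary_pairing (u : point d) : \sum_i a i * pairing u (v i) = 0.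
Proof.
rewrite -pairing_sumr a_bary /pairing.
by apply: big1 => j _; rewrite mxE mulr0.
Qed.

Lemma vertex_loose_index (u : point d) :
  \sum_i a i = 1 -> is_vertex (dual (conv_hull v)) u ->
  exists k, forall j, j != k -> pairing u (v j) = -1.
Proof.
move=> a_sum u_vert; have /dual_conv_hullP u_ge := u_vert.1.
have [k k_loose] : exists k, -1 < pairing u (v k).
  apply/existsP; apply/negP => /existsP no_loose.
  have tight j : pairing u (v j) = -1.
    apply/eqP; rewrite eq_le u_ge andbT leNgt.
    by apply/negP => j_loose; apply: no_loose; exists j.
  have := bary_pairing u; under eq_bigr => i _ do rewrite tight.
  by rewrite -mulr_suml a_sum mul1r => /eqP; rewrite oppr_eq0 oner_eq0.
exists k => j j_k; have := u_ge j; rewrite le_eqVlt => /orP [/eqP // | j_loose].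
by rewrite (vertex_loose_unique u_vert j_loose k_loose) eqxx in j_k.
Qed.

(* Two vertices of the dual that are tight at all indices but k coincide: their
   difference is orthogonal to every v_j (at v_k because of the barycenter). *)
Lemma vertex_loose_index_inj (u1 u2 : point d) (k : 'I_d.+1) :
  is_vertex (dual (conv_hull v)) u1 ->
  (forall j, j != k -> pairing u1 (v j) = -1) ->
  (forall j, j != k -> pairing u2 (v j) = -1) -> u1 = u2.
Proof.
move=> u1_vert u1_tight u2_tight.
have orth_off j : j != k -> pairing (u1 - u2) (v j) = 0.
  by move=> j_k; rewrite pairingBl u1_tight // u2_tight // subrr.
have orth j : pairing (u1 - u2) (v j) = 0.
  have [-> | /orth_off //] := eqVneq j k.
  have := bary_pairing (u1 - u2); rewrite (bigD1 k) //= big1 ?addr0; last first.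
    by move=> i /orth_off ->; rewrite mulr0.
  by move/eqP; rewrite mulf_eq0 (gt_eqF (a_pos k)) => /eqP.
by apply/subr0_eq/(vertex_rigid u1_vert) => j; rewrite orth eqxx.
Qed.

End DualVertices.

(* Cramer step: if g W is integral and every row of W pairs to -1 with a
   primitive point p, then g^(n) det W is an integer for W of size n + 1.
   Indeed Y = g W satisfies Y p^T = -g 1, so det(Y) p = -g adj(Y) 1, i.e.
   (g^n det W) p = -adj(Y) 1 is integral. *)
Lemma tight_rows_det_int n (W : 'M[rat]_n.+1) (p : point n.+1) (g : nat) :
  (0 < g)%N -> primitive p ->
  (forall r j, g%:R * W r j \is a Num.int) ->
  (forall r, \sum_j W r j * p 0 j = -1) ->
  (g ^ n)%:R * \det W \is a Num.int.
Proof.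
move=> g_pos p_prim gW_int W_tight.
pose Y := g%:R *: W.
have Y_p : Y *m p^T = const_mx (- g%:R).
  apply/colP => r; rewrite !mxE -[RHS]mulrN1 -(W_tight r) mulr_sumr.
  by apply: eq_bigr => j _; rewrite !mxE mulrA.
have cramer l : \det Y * p 0 l = - g%:R * \sum_r \adj Y l r.
  have := congr1 (fun M : 'cV[rat]_n.+1 => M l 0) (congr1 (mulmx (\adj Y)) Y_p).
  rewrite /= mulmxA mul_adj_mx mul_scalar_mx !mxE => ->; rewrite mulr_sumr.
  by apply: eq_bigr => r _; rewrite [const_mx _ _ _]mxE mulrC.
apply: (primitive_scale_int p_prim) => l.
have g_neq0 : (g%:R : rat) != 0 by rewrite pnatr_eq0 -lt0n.
have -> : (g ^ n)%:R * \det W * p 0 l = - \sum_r \adj Y l r.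
  apply: (mulfI g_neq0); rewrite mulrN -mulNr -cramer /Y detZ exprS natrX.
  by rewrite !mulrA.
rewrite rpredN; apply: rpred_sum => r _; rewrite mxE /cofactor; apply: rpredM.
  by apply: rpredX; apply: rpredN; apply: rpred1.
by apply: det_int => i j; rewrite !mxE.
Qed.

Theorem lemma4p1 (d : nat) (v : 'I_d.+1 -> point d) (g : nat)
  (w : 'I_d.+1 -> point d) (lam : rat) :
  Fano_simplex v ->
  gorenstein_index v g ->
  enumerates_vertices (dual (conv_hull v)) w ->
  is_factor (weight w) lam ->
  (g ^ (d - 1))%:R * lam \is a Num.int.
Proof.
move=> [_ [v_prim [a [a_pos [a_sum a_bary]]]]] [g_pos [g_int _]] [w_inj w_vert] lam_fac.
destruct d as [|d].
  by case: (no_primitive_point0 (v_prim ord0)).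
have g_pos' : (0 : rat) < g%:R by rewrite ltr0n.
have vert j : is_vertex (dual (conv_hull v)) (w j) by apply/w_vert; exists j.
have [k k_tight] := fin_all_exists (fun j => vertex_loose_index a_bary a_sum (vert j)).
have k_inj : injective k.
  move=> j1 j2 k_eq; apply/w_inj/(vertex_loose_index_inj a_pos a_bary (vert j1)).
    exact: k_tight.
  by rewrite k_eq; apply: k_tight.
apply: (factor_scale_int lam_fac) => i.
pose W := \matrix_(r < d.+1, j < d.+1) w (lift i r) 0 j.
have gW_int r j : g%:R * W r j \is a Num.int.
  by have := g_int _ (dilate_vertex g_pos' (vert (lift i r))) j; rewrite !mxE.
have W_tight r : \sum_j W r j * v (k i) 0 j = -1.
  rewrite -(k_tight (lift i r) (k i)); last by rewrite (inj_eq k_inj) neq_lift.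
  by apply: eq_bigr => j _; rewrite mxE.
have /intrP [z gW_z] := tight_rows_det_int g_pos (v_prim (k i)) gW_int W_tight.
rewrite subSS subn0 /weight -/W -[(g ^ d)%:R]ger0_norm ?ler0n // -normrM gW_z.
by rewrite -intr_norm intr_int.
Qed.
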